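(* Let $n,k,d\in\mathbb{N}$ with $n\ge k\ge d$. Then every symmetric polynomial $f=\sum_{\ell=0}^d\alpha_\ell f_\ell$ on $\{-1,1\}^n$ (with $\alpha_0,\dots,\alpha_d\in\mathbb{R}$) satisfies $$\inf_{g\in \mathscr{P}_{>k}^n} \|f-g\|_1 \leq \sum_{\ell=0}^d |\alpha _\ell|\, | \tilde{c}(k,\ell)|.$$
   Context: For $\ell\ge1$, $f_\ell(x)=\sum_{S\subseteq\{1,\dots,n\},|S|=\ell}\prod_{i\in S}x_i$ is the $\ell$-th elementary symmetric multilinear polynomial on $\{-1,1\}^n$, and $f_0\equiv1$. Every $g:\{-1,1\}^n\to\mathbb{R}$ has a unique expansion $g=\sum_S\widehat g(S)w_S$ with $w_S(x)=\prod_{i\in S}x_i$, and $\mathscr{P}^n_{>k}=\{g:\ \widehat g(S)=0\text{ whenever }|S|\le k\}$. $\|\cdot\|_1$ is the $L_1$ norm with respect to the uniform probability measure on $\{-1,1\}^n$. Let $T_k(x)=\sum_{\ell=0}^k c(k,\ell)x^\ell$ be the $k$-th Chebyshev polynomial of the first kind, $T_k(\cos\theta)=\cos(k\theta)$ (with $c(k,\ell)=0$ for $\ell>k$). Define $\tilde c(k,\ell)=c(k,\ell)$ if $k-\ell$ is even and $\tilde c(k,\ell)=c(k-1,\ell)$ if $k-\ell$ is odd. *)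

From HB Require Import structures.
From mathcomp Require Import all_boot all_order all_algebra.
From mathcomp Require Import boolp classical_sets reals.
Unset Printing Implicit Defensive.
Import Order.TTheory GRing.Theory Num.Theory.
Local Open Scope ring_scope.

(* The hypercube {-1,1}^n : a point is encoded by a boolean vector b,
   with coordinate x_i = (-1)^(b i), i.e. true |-> -1, false |-> 1. *)
Definition cube (n : nat) := {ffun 'I_n -> bool}.

Definition coord {R : realType} (b : bool) : R := if b then -1 else 1.

Definition walsh {R : realType} (n : nat) (S : {set 'I_n}) (x : cube n) : R :=
  \prod_(i in S) coord (x i).

Definition esym {R : realType} (n l : nat) (x : cube n) : R :=
  \sum_(S : {set 'I_n} | #|S| == l) walsh n S x.

Definition symf {R : realType} (n d : nat) (alpha : nat -> R) (x : cube n) : R :=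
  \sum_(l < d.+1) alpha l * esym n l x.

Definition Pgt {R : realType} (n k : nat) : set (cube n -> R) :=
  [set g | exists c : {set 'I_n} -> R,
      (forall S : {set 'I_n}, (#|S| <= k)%N -> c S = 0) /\
      (forall x : cube n, g x = \sum_(S : {set 'I_n}) c S * walsh n S x)].

Definition norm1 {R : realType} (n : nat) (h : cube n -> R) : R :=
  (\sum_(x : cube n) `|h x|) / (2 ^+ n).

Fixpoint chebT2 {R : realType} (k : nat) : {poly R} * {poly R} :=
  match k with
  | 0 => (1, 'X)
  | k'.+1 => let p := chebT2 k' in (p.2, 2%:P * 'X * p.2 - p.1)
  end.
Definition chebT {R : realType} (k : nat) : {poly R} := (chebT2 k).1.

Definition chebc {R : realType} (k l : nat) : R := (chebT k)`_l.

Definition ctilde {R : realType} (k l : nat) : R :=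
  if odd (k - l) then chebc (R := R) k.-1 l else chebc (R := R) k l.

(* For each l <= d we build a finitely supported signed measure mu_l on
   [-1, 1] with moments  int t^m dmu_l = [m == l]  for all m <= k and total
   variation |ctilde(k, l)|.  The Riesz products
   P_t(x) = prod_i (1 + t x_i) = sum_S t^|S| w_S  are nonnegative with mean 1
   when |t| <= 1, so  H = sum_l alpha_l int P_t dmu_l(t)  has the same Walsh
   coefficients as f in degrees <= k (f - H lies in P_{>k}) and
   ||H||_1 <= sum_l |alpha_l| |ctilde(k, l)|.

   For mu_l, let K be the largest integer <= k with the parity of l, so that
   ctilde(k, l) = c(K, l).  At the nonnegative extrema eta_i = cos(i pi / K),
   2i <= K, of T_K, Lagrange interpolation in the squared nodes eta_i^2 gives
   weights w_i with  sum_i w_i eta_i^m = [m == l]  for every m <= K of the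
   parity of l.  As the squared nodes are nonnegative and decreasing, the
   coefficients of the Lagrange basis alternate in sign with i, whence
   sum_i |w_i| = |sum_i (-1)^i w_i| = |sum_i w_i T_K(eta_i)| = |c(K, l)|.
   Symmetrizing  sum_i w_i delta_{eta_i}  according to the parity of l kills
   the moments of the other parity. *)

From Pilot Require Import Defs.
From HB Require Import structures.
From mathcomp Require Import all_boot all_order all_algebra.
From mathcomp Require Import boolp classical_sets reals trigo.
From mathcomp Require Import ring lra zify.
Import Order.TTheory GRing.Theory Num.Theory.
Local Open Scope ring_scope.

Section Chebyshev.
Variable R : realType.

Lemma chebT2_coef_eq0 (k m : nat) :
  (odd (k + m) || (k < m)%N -> ((chebT2 (R:=R) k).1)`_m = 0) /\
  (odd (k.+1 + m) || (k.+1 < m)%N -> ((chebT2 (R:=R) k).2)`_m = 0).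
Proof.
elim: k m => [|k IHk] m /=.
  split; first by case: m => [|[|m]] //= _; rewrite coefC.
  by rewrite coefX; case: m => [|[|m]].
split=> [|m_cond]; first by have [_] := IHk m.
rewrite coefB -mulrA coefCM coefXM (proj1 (IHk m)); last first.
  by move: m_cond; rewrite /= negbK; case: (odd (k + m)) => //= m_cond; lia.
case: m m_cond => [|m] m_cond; first by rewrite mulr0 subr0.
by rewrite (proj2 (IHk m)) ?mulr0 ?subr0 // addSnnS; move: m_cond; rewrite negbK.
Qed.

Lemma chebc_eq0 (k m : nat) : odd (k + m) || (k < m)%N -> chebc (R:=R) k m = 0.
Proof. by have [+ _] := chebT2_coef_eq0 k m. Qed.

Lemma size_chebT (k : nat) : (size (chebT (R:=R) k) <= k.+1)%N.
Proof. by apply/leq_sizeP => m km; apply: chebc_eq0; rewrite km orbT. Qed.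

Lemma chebT_cos (k : nat) (t : R) : (chebT k).[cos t] = cos (k%:R * t).
Proof.
suff : ((chebT2 (R:=R) k).1).[cos t] = cos (k%:R * t) /\
       ((chebT2 (R:=R) k).2).[cos t] = cos (k.+1%:R * t) by case.
elim: k => [|k [IH1 IH2]] /=; first by rewrite hornerC hornerX mul0r cos0 mul1r.
split=> //; rewrite hornerD hornerN !hornerM hornerC hornerX IH1 IH2.
have -> : k.+2%:R * t = k.+1%:R * t + t by rewrite -[k.+2]addn1 natrD; ring.
have -> : k%:R * t = k.+1%:R * t - t by rewrite -[k.+1]addn1 natrD; ring.
rewrite !cosD cosN sinN; ring.
Qed.

End Chebyshev.

Definition cheb_node {R : realType} (K i : nat) : R := cos (i%:R * pi / K%:R).

Section ChebyshevNodes.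
Variables (R : realType) (K : nat).

Local Notation node := (@cheb_node R K).

Lemma cheb_angle_ge0 (i : nat) : 0 <= i%:R * pi / K%:R :> R.
Proof. by rewrite divr_ge0 // mulr_ge0 // pi_ge0. Qed.

Lemma cheb_angle_le_pihalf (i : nat) : (i.*2 <= K)%N -> i%:R * pi / K%:R <= pi / 2 :> R.
Proof.
move=> iK; have [K0|K_gt0] := posnP K; first by rewrite K0 invr0 mulr0 divr_ge0 ?pi_ge0.
have : i%:R * 2 <= K%:R :> R by rewrite -natrM ler_nat muln2.
rewrite ler_pdivrMr ?ltr0n //; have := pi_gt0 R; nra.
Qed.

Lemma cheb_angle_lt_pihalf (i : nat) : (i.*2 < K)%N -> i%:R * pi / K%:R < pi / 2 :> R.
Proof.
move=> iK; have K_gt0 : (0 < K)%N by lia.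
have : i%:R * 2 < K%:R :> R by rewrite -natrM ltr_nat muln2.
rewrite ltr_pdivrMr ?ltr0n //; have := pi_gt0 R; nra.
Qed.

Lemma cheb_node_ge0 (i : nat) : (i.*2 <= K)%N -> 0 <= node i.
Proof.
move=> iK; apply: cos_ge0_pihalf; rewrite cheb_angle_le_pihalf // andbT.
by rewrite (le_trans _ (cheb_angle_ge0 i)) // oppr_le0 divr_ge0 ?pi_ge0.
Qed.

Lemma cheb_node_gt0 (i : nat) : (i.*2 < K)%N -> 0 < node i.
Proof.
move=> iK; apply: cos_gt0_pihalf; rewrite cheb_angle_lt_pihalf // andbT.
by rewrite (lt_le_trans _ (cheb_angle_ge0 i)) // oppr_lt0 divr_gt0 ?pi_gt0.
Qed.

Lemma cheb_node_lt (i j : nat) : (i < j)%N -> (j.*2 <= K)%N -> node j < node i.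
Proof.
move=> ij jK; have K_gt0 : (0 < K)%N by lia.
have angle_in_0pi (h : nat) : (h.*2 <= K)%N -> h%:R * pi / K%:R \in `[0, pi : R].
  move=> hK; rewrite in_itv /= cheb_angle_ge0 (le_trans (cheb_angle_le_pihalf _ hK)) //.
  by rewrite ler_pdivrMr // ler_peMr ?pi_ge0 // ler1n.
rewrite /cheb_node ltr_cos ?angle_in_0pi //; last by lia.
by rewrite ltr_pM2r ?invr_gt0 ?ltr0n // ltr_pM2r ?pi_gt0 // ltr_nat.
Qed.

Lemma chebT_node (i : nat) : (i.*2 <= K)%N -> (chebT K).[node i] = (-1) ^+ i.
Proof.
move=> iK; rewrite chebT_cos; have [K0|K_gt0] := posnP K.
  by move: iK; rewrite K0 leqn0 double_eq0 => /eqP->; rewrite mul0r cos0.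
rewrite mulrC divfK ?pnatr_eq0 -?lt0n //.
elim: i {iK} => [|i IHi]; first by rewrite mul0r cos0.
by rewrite -addn1 natrD mulrDl mul1r cosDpi IHi exprD expr1 mulrN1.
Qed.

End ChebyshevNodes.

Section LagrangeSigns.
Variable R : realFieldType.

Lemma coef_prod_XsubC_sign {I : Type} (r : seq I) {P : pred I} {a : I -> R} (m : nat) :
  (forall j, P j -> 0 <= a j) ->
  0 <= (-1) ^+ (count P r + m) * (\prod_(j <- r | P j) ('X - (a j)%:P))`_m.
Proof.
move=> a_ge0; elim: r m => [|j r IHr] m /=.
  by rewrite big_nil coefC; case: m => [|m] /=; rewrite ?mulr0 ?mulr1.
rewrite big_cons; case: ifP => Pj; last exact: IHr.
rewrite mulrBl coefB coefXM coefCM add1n.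
have sgnS (k : nat) : (-1) ^+ k.+1 = - (-1) ^+ k :> R by rewrite exprS mulN1r.
case: m => [|m] /=.
  by rewrite sub0r addSn sgnS mulrNN mulrCA mulr_ge0 ?a_ge0 ?IHr.
have -> : ((count P r).+1 + m.+1 = (count P r + m.+1).+1)%N by rewrite addSn.
rewrite sgnS mulNr mulrBr opprB addrC {1}addnS sgnS mulNr opprK.
by rewrite addr_ge0 ?IHr // mulrCA mulr_ge0 ?a_ge0 ?IHr.
Qed.

Variables (M : nat) (x : nat -> R).
Hypothesis x_inj : injective x.
Hypothesis x_ge0 : forall i, (i <= M)%N -> 0 <= x i.
Hypothesis x_lt : forall i j, (i < j)%N -> (j <= M)%N -> x j < x i.

Local Notation L := (tnth (M.+1.-lagrange x)).

Lemma lagrange_moment (r q : nat) : (q <= M)%N ->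
  \sum_(i < M.+1) (L i)`_r * x i ^+ q = (r == q)%:R.
Proof.
move=> qM; have qM1 : (size ('X^q : {poly R}) <= M.+1)%N by rewrite size_polyXn.
rewrite -coefXn [in RHS](lagrange_gen _ x_inj qM1) // coef_sum.
by apply: eq_bigr => i _; rewrite coefCM hornerXn mulrC.
Qed.

Lemma lagrange_denom_sign (i : 'I_M.+1) :
  0 < (-1) ^+ i * (\prod_(j < M.+1 | j != i) ('X - (x j)%:P)).[x i].
Proof.
have xiM (j : 'I_M.+1) : (j <= M)%N by rewrite -ltnS.
have factorE (j : 'I_M.+1) : j != i ->
    ('X - (x j)%:P).[x i] = (-1) ^+ (j < i)%N * `|x i - x j|.
  move=> ji; rewrite hornerXsubC.
  case: (ltngtP j i) => [j_lt_i|i_lt_j|/val_inj j_eq_i]; last by rewrite j_eq_i eqxx in ji.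
  - by rewrite expr1 mulN1r ltr0_norm ?opprK // subr_lt0 x_lt.
  - by rewrite expr0 mul1r gtr0_norm // subr_gt0 x_lt.
rewrite horner_prod (eq_bigr _ factorE) big_split /= prodrXr.
have -> : (\sum_(j < M.+1 | j != i) (j < i)%N)%N = i.
  rewrite [RHS](_ : nat_of_ord i = \sum_(j < M.+1 | (j < i)%N) 1)%N; last first.
    by rewrite -(big_ord_widen _ (fun=> 1%N) (ltnW (ltn_ord i))) sum1_card card_ord.
  rewrite [RHS]big_mkcond [RHS](bigD1 i) //= ltnn add0n.
  by apply: eq_bigr => j _; case: ltnP.
rewrite mulrA -exprD addnn -signr_odd odd_double mul1r.
apply: prodr_gt0 => j ji; rewrite normr_gt0 subr_eq0.
by apply: contra ji => /eqP/x_inj/val_inj->.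
Qed.

Lemma lagrange_coef_sign (r : nat) (i : 'I_M.+1) : 0 <= (-1) ^+ (M + r + i) * (L i)`_r.
Proof.
rewrite (lagrangeE (ltn0Sn _) x_inj) /= coefCM.
set p := \prod_(j < M.+1 | j != i) _.
have p_sign : 0 <= (-1) ^+ (M + r) * p`_r.
  have x_ge0' (j : 'I_M.+1) : j != i -> 0 <= x j by move=> _; rewrite x_ge0 // -ltnS.
  have := coef_prod_XsubC_sign (index_enum 'I_M.+1) r x_ge0'.
  by rewrite -sum1_count sum1_card cardC1 card_ord.
have denom_sign := lagrange_denom_sign i; rewrite -/p in denom_sign.
have -> : (-1) ^+ (M + r + i) * ((p.[x i])^-1 * p`_r) =
          ((-1) ^+ i * p.[x i])^-1 * ((-1) ^+ (M + r) * p`_r).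
  by rewrite invfM invr_sign exprD; ring.
by rewrite mulr_ge0 // invr_ge0 ltW.
Qed.

End LagrangeSigns.

Arguments lagrange_moment {R M x}.
Arguments lagrange_coef_sign {R M x}.

Lemma sum_norm_alternating {R : numDomainType} {n c : nat} (w : 'I_n -> R) :
  (forall i : 'I_n, 0 <= (-1) ^+ (c + i) * w i) ->
  \sum_(i < n) `|w i| = `|\sum_(i < n) (-1) ^+ i * w i|.
Proof.
move=> w_sign; have normwE (i : 'I_n) : `|w i| = (-1) ^+ c * ((-1) ^+ i * w i).
  by rewrite mulrA -exprD -(ger0_norm (w_sign i)) normrM normr_sign mul1r.
rewrite (eq_bigr _ (fun i _ => normwE i)) -mulr_sumr.
rewrite -[LHS]ger0_norm ?normrM ?normr_sign ?mul1r //.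
by rewrite mulr_sumr sumr_ge0 // => i _; rewrite mulrA -exprD.
Qed.

(* A finitely supported signed measure is encoded as the list of its
   (atom, mass) pairs. *)
Definition moment {R : numFieldType} (mu : seq (R * R)) (m : nat) : R :=
  \sum_(a <- mu) a.2 * a.1 ^+ m.

Definition variation {R : numFieldType} (mu : seq (R * R)) : R :=
  \sum_(a <- mu) `|a.2|.

Definition symmetrize {R : numFieldType} (e : bool) (mu : seq (R * R)) : seq (R * R) :=
  [seq (a.1, a.2 / 2) | a <- mu] ++ [seq (- a.1, (-1) ^+ e * a.2 / 2) | a <- mu].

Section AtomicMeasures.
Variable R : numFieldType.
Implicit Types (mu : seq (R * R)) (e : bool) (m : nat).

Lemma moment_symmetrize e mu m :
  moment (symmetrize e mu) m = (1 + (-1) ^+ (e + m)) / 2 * moment mu m.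
Proof.
rewrite /moment big_cat !big_map /= -big_split mulr_sumr /=.
by apply: eq_bigr => a _; rewrite (exprNn a.1) exprD; ring.
Qed.

Lemma variation_symmetrize e mu : variation (symmetrize e mu) = variation mu.
Proof.
rewrite /variation big_cat !big_map /= -big_split /=; apply: eq_bigr => a _.
by rewrite -mulrA !normrM normr_sign mul1r [`|_^-1|]ger0_norm ?invr_ge0 ?ler0n // -splitr.
Qed.

Lemma symmetrize_bounded e mu :
  all (fun a => `|a.1| <= 1) mu -> all (fun a => `|a.1| <= 1) (symmetrize e mu).
Proof.
move=> mu_bd; rewrite all_cat !all_map mu_bd.
by apply: sub_all mu_bd => a; rewrite /= normrN.
Qed.

Lemma sum_horner_moment mu (p : {poly R}) (N : nat) : (size p <= N)%N ->
  \sum_(a <- mu) a.2 * p.[a.1] = \sum_(m < N) p`_m * moment mu m.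
Proof.
move=> pN; under eq_bigr do rewrite (horner_coef_wide _ pN) mulr_sumr.
rewrite exchange_big /=; apply: eq_bigr => m _.
by rewrite /moment mulr_sumr; apply: eq_bigr => a _; rewrite mulrCA.
Qed.

End AtomicMeasures.

(* [lagrange] takes nodes [x : nat -> R] that are injective on all of [nat],
   although only [x 0, ..., x M] enter; the other values are sent to distinct
   negative numbers. *)
Definition extend_nodes {R : numDomainType} (M : nat) (s : nat -> R) (j : nat) : R :=
  if (j <= M)%N then s j else - j%:R.

Lemma extend_nodes_inj (R : realDomainType) (M : nat) (s : nat -> R) :
  (forall i, (i <= M)%N -> 0 <= s i) ->
  (forall i j, (i < j)%N -> (j <= M)%N -> s j < s i) ->
  injective (extend_nodes M s).
Proof.
move=> s_ge0 s_lt i j; rewrite /extend_nodes.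
wlog ij : i j / (i <= j)%N => [hwlog|].
  by case: (leqP i j) => [/hwlog//|/ltnW ji /esym/hwlog ->].
case: (leqP i M) => iM; case: (leqP j M) => jM.
- rewrite leq_eqVlt in ij; case/orP: ij => [/eqP //|ij].
  by move=> sij; have := s_lt _ _ ij jM; rewrite sij ltxx.
- move=> sij; have := s_ge0 _ iM; rewrite sij oppr_ge0 lern0; lia.
- lia.
- by move/eqP; rewrite eqr_opp eqr_nat => /eqP.
Qed.

(* Dividing by [eta_i ^+ odd l] turns [w_i * eta_i ^+ m] into
   [L_i`_(l./2) * (eta_i ^+ 2) ^+ m./2] whenever [m] has the parity of [l]. *)
Definition cheb_weight {R : realType} (K l : nat) (i : 'I_(K./2).+1) : R :=
  (tnth ((K./2).+1.-lagrange (extend_nodes (K./2) (fun j => cheb_node K j ^+ 2))) i)`_(l./2)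
  / cheb_node K i ^+ odd l.

Definition cheb_atoms {R : realType} (K l : nat) : seq (R * R) :=
  [seq (cheb_node K i, cheb_weight K l i) | i : 'I_(K./2).+1].

Section ChebyshevWeights.
Variables (R : realType) (K l : nat).
Hypotheses (l_le_K : (l <= K)%N) (odd_K : odd K = odd l).

Local Notation M := K./2.
Local Notation node := (@cheb_node R K).
Local Notation x := (extend_nodes M (fun j => node j ^+ 2)).
Local Notation w := (@cheb_weight R K l).

Let node_ge0 (i : nat) : (i <= M)%N -> 0 <= node i.
Proof. by rewrite geq_half_double; apply: cheb_node_ge0. Qed.

Let x_ge0 (i : nat) : (i <= M)%N -> 0 <= x i.
Proof. by move=> iM; rewrite /extend_nodes iM sqr_ge0. Qed.

Let sq_node_lt (i j : nat) : (i < j)%N -> (j <= M)%N -> node j ^+ 2 < node i ^+ 2.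
Proof.
move=> ij jM; rewrite ltr_pXn2r ?nnegrE ?node_ge0 //; last exact: leq_trans (ltnW ij) jM.
by apply: cheb_node_lt; rewrite // -geq_half_double.
Qed.

Let x_lt (i j : nat) : (i < j)%N -> (j <= M)%N -> x j < x i.
Proof. by move=> ij jM; rewrite /extend_nodes jM (leq_trans (ltnW ij) jM) sq_node_lt. Qed.

Let x_inj : injective x.
Proof. by apply: extend_nodes_inj => [i _|]; [rewrite sqr_ge0 | exact: sq_node_lt]. Qed.

Let node_odd_gt0 (i : 'I_M.+1) : 0 < node i ^+ odd l.
Proof.
case: (boolP (odd l)) => [odd_l|]; last by rewrite expr0.
rewrite expr1 cheb_node_gt0 // ltn_neqAle -geq_half_double -ltnS ltn_ord andbT.
by apply: contraTneq odd_l => doubleE; rewrite -odd_K -doubleE odd_double.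
Qed.

Let sum_cheb_atoms (F : R * R -> R) :
  \sum_(a <- cheb_atoms K l) F a = \sum_(i < M.+1) F (node i, w i).
Proof. by rewrite big_image; apply: eq_bigl. Qed.

Lemma moment_cheb_atoms (m : nat) : (m <= K)%N -> odd m = odd l ->
  moment (cheb_atoms (R:=R) K l) m = (m == l)%:R.
Proof.
move=> mK odd_m; rewrite /moment sum_cheb_atoms.
have -> : (m == l) = (l./2 == m./2).
  apply/eqP/eqP => [-> //|eq_half].
  by rewrite -[m]odd_double_half -[l]odd_double_half odd_m eq_half.
rewrite -(lagrange_moment x_inj _ _ (half_leq mK)); apply: eq_bigr => i _.
have mE : m = (odd l + (m./2).*2)%N by rewrite -odd_m odd_double_half.
have xE : x i = node i ^+ 2 by rewrite /extend_nodes -ltnS ltn_ord.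
rewrite xE -exprM mul2n /cheb_weight [X in _ * node i ^+ X]mE exprD mulrA.
by rewrite divfK // gt_eqF.
Qed.

Lemma cheb_weight_sign (i : 'I_M.+1) : 0 <= (-1) ^+ (M + l./2 + i) * w i.
Proof.
rewrite /cheb_weight mulrA divr_ge0 ?(ltW (node_odd_gt0 i)) //.
exact: (lagrange_coef_sign x_inj x_ge0 x_lt).
Qed.

Lemma sum_horner_cheb_atoms :
  \sum_(a <- cheb_atoms K l) a.2 * (chebT K).[a.1] = chebc (R:=R) K l.
Proof.
rewrite (sum_horner_moment R _ _ _ (size_chebT R K)).
have l_lt_K1 : (l < K.+1)%N by rewrite ltnS.
rewrite (bigD1 (Ordinal l_lt_K1)) //= moment_cheb_atoms // eqxx mulr1 big1 ?addr0 //.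
move=> m; rewrite -val_eqE /= => /negPf m_neq_l.
have [odd_m|odd_m] := eqVneq (odd m) (odd l).
  by rewrite moment_cheb_atoms ?m_neq_l ?mulr0 // -ltnS.
rewrite -/(chebc K m); suff -> : chebc (R:=R) K m = 0 by rewrite mul0r.
by apply: chebc_eq0; rewrite oddD odd_K; move: odd_m; case: (odd l); case: (odd m).
Qed.

Lemma variation_cheb_atoms : variation (cheb_atoms (R:=R) K l) = `|chebc K l|.
Proof.
rewrite /variation sum_cheb_atoms (sum_norm_alternating _ cheb_weight_sign).
rewrite -sum_horner_cheb_atoms [in RHS]sum_cheb_atoms; congr `|_|.
apply: eq_bigr => i _; rewrite chebT_node; first exact: mulrC.
by rewrite -geq_half_double -ltnS.
Qed.

End ChebyshevWeights.

Definition cheb_degree (k l : nat) : nat := if odd (k - l) then k.-1 else k.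

Definition cheb_measure {R : realType} (k l : nat) : seq (R * R) :=
  symmetrize (odd l) (cheb_atoms (cheb_degree k l) l).

Lemma ctilde_cheb_degree (R : realType) (k l : nat) :
  ctilde (R:=R) k l = chebc (cheb_degree k l) l.
Proof. by rewrite /ctilde /cheb_degree; case: ifP. Qed.

Lemma cheb_atoms_bounded (R : realType) (K l : nat) :
  all (fun a => `|a.1| <= 1) (cheb_atoms (R:=R) K l).
Proof. by apply/allP => _ /mapP[i _ ->]; rewrite ler_norml cos_geN1 cos_le1. Qed.

Section ChebyshevMeasure.
Variables (R : realType) (k l : nat).
Hypothesis l_le_k : (l <= k)%N.

Local Notation K := (cheb_degree k l).

Let odd_K : odd K = odd l.
Proof.
rewrite /cheb_degree; case: ifP => [odd_kl|]; last first.
  by rewrite oddB //; case: (odd k); case: (odd l).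
have [k0|k_gt0] := posnP k; first by rewrite k0 sub0n in odd_kl.
move: odd_kl; rewrite oddB // -[in odd k](prednK k_gt0) /=.
by case: (odd k.-1); case: (odd l).
Qed.

Let le_K (m : nat) : (m <= k)%N -> odd m = odd l -> (m <= K)%N.
Proof.
move=> mk odd_m; rewrite /cheb_degree; case: ifP => // odd_kl.
have : m != k by apply: contraTneq odd_kl => km; rewrite oddB // -km odd_m addbb.
lia.
Qed.

Lemma moment_cheb_measure (m : nat) : (m <= k)%N ->
  moment (cheb_measure (R:=R) k l) m = (m == l)%:R.
Proof.
move=> mk; rewrite moment_symmetrize.
have [odd_m|odd_m] := eqVneq (odd m) (odd l).
  have [lK mK] := (le_K _ l_le_k erefl, le_K _ mk odd_m).
  rewrite moment_cheb_atoms //.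
  by rewrite -signr_odd oddD oddb odd_m addbb expr0; lra.
rewrite -signr_odd oddD oddb (_ : odd l (+) odd m = true) ?expr1 ?subrr ?mul0r.
  by have /negPf-> : m != l by apply: contraNneq odd_m => ->.
by move: odd_m; case: (odd l); case: (odd m).
Qed.

Lemma variation_cheb_measure : variation (cheb_measure (R:=R) k l) = `|ctilde k l|.
Proof.
by rewrite variation_symmetrize variation_cheb_atoms ?(le_K _ l_le_k) // ctilde_cheb_degree.
Qed.

End ChebyshevMeasure.

Lemma cheb_measure_bounded (R : realType) (k l : nat) :
  all (fun a => `|a.1| <= 1) (cheb_measure (R:=R) k l).
Proof. exact/symmetrize_bounded/cheb_atoms_bounded. Qed.

Definition riesz {R : realType} (n : nat) (t : R) (x : cube n) : R :=
  \prod_(i < n) (1 + t * Defs.coord (x i)).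

Definition riesz_integral {R : realType} (n : nat) (mu : seq (R * R)) (x : cube n) : R :=
  \sum_(a <- mu) a.2 * riesz n a.1 x.

Section Cube.
Variables (R : realType) (n : nat).
Implicit Types (t : R) (x : cube n) (h : cube n -> R) (mu : seq (R * R)).

Lemma riesz_walsh t x : riesz n t x = \sum_(S : {set 'I_n}) t ^+ #|S| * walsh n S x.
Proof.
rewrite /riesz; under eq_bigr do rewrite addrC.
rewrite bigA_distr; apply: eq_bigr => S _.
by rewrite -big_mkcond /= big_split /= prodr_const.
Qed.

Lemma riesz_ge0 t x : `|t| <= 1 -> 0 <= riesz n t x.
Proof.
rewrite ler_norml => /andP[t_geN1 t_le1]; apply: prodr_ge0 => i _.
by rewrite /Defs.coord; case: (x i); lra.
Qed.

Lemma sum_riesz t : \sum_x riesz n t x = 2 ^+ n.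
Proof.
rewrite /riesz -(bigA_distr_bigA (fun (i : 'I_n) b => 1 + t * Defs.coord (R:=R) b)).
rewrite (eq_bigr (fun=> 2)) ?prodr_const ?card_ord // => i _.
by rewrite big_bool /= /Defs.coord; ring.
Qed.

Lemma riesz_integral_walsh mu x :
  riesz_integral n mu x = \sum_(S : {set 'I_n}) moment mu #|S| * walsh n S x.
Proof.
rewrite /riesz_integral; under eq_bigr do rewrite riesz_walsh mulr_sumr.
rewrite exchange_big /=; apply: eq_bigr => S _.
by rewrite /moment mulr_suml; apply: eq_bigr => a _; rewrite mulrA.
Qed.

Lemma norm1_ge0 h : 0 <= norm1 n h.
Proof. by rewrite /norm1 divr_ge0 ?exprn_ge0 ?sumr_ge0. Qed.

Lemma norm1_sum_le (I : Type) (r : seq I) (F : I -> cube n -> R) :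
  norm1 n (fun x => \sum_(i <- r) F i x) <= \sum_(i <- r) norm1 n (F i).
Proof.
rewrite /norm1 -mulr_suml ler_wpM2r ?invr_ge0 ?exprn_ge0 // exchange_big /=.
by apply: ler_sum => x _; apply: ler_norm_sum.
Qed.

Lemma norm1_scale (a : R) h : norm1 n (fun x => a * h x) = `|a| * norm1 n h.
Proof.
rewrite /norm1 mulrA mulr_sumr; congr (_ / _).
by apply: eq_bigr => x _; rewrite normrM.
Qed.

Lemma norm1_riesz t : `|t| <= 1 -> norm1 n (riesz n t) = 1.
Proof.
move=> t_le1; rewrite /norm1 (eq_bigr _ (fun x _ => ger0_norm (riesz_ge0 t x t_le1))).
by rewrite sum_riesz divff // expf_neq0 // pnatr_eq0.
Qed.

Lemma norm1_riesz_integral mu : all (fun a => `|a.1| <= 1) mu ->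
  norm1 n (riesz_integral n mu) <= variation mu.
Proof.
move=> /allP mu_bd; apply: le_trans (norm1_sum_le _ mu (fun a x => a.2 * riesz n a.1 x)) _.
rewrite big_seq [X in _ <= X]big_seq; apply: ler_sum => a a_mu.
by rewrite norm1_scale norm1_riesz ?mulr1 ?mu_bd.
Qed.

Lemma symf_walsh (d : nat) (alpha : nat -> R) x :
  symf n d alpha x =
  \sum_(S : {set 'I_n}) (\sum_(l < d.+1) alpha l * (#|S| == l)%:R) * walsh n S x.
Proof.
rewrite /symf /Defs.esym; under eq_bigr do rewrite big_mkcond mulr_sumr.
rewrite exchange_big /=; apply: eq_bigr => S _; rewrite mulr_suml.
by apply: eq_bigr => l _; case: eqP; rewrite ?mulr1 ?mulr0 ?mul0r.
Qed.

End Cube.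

Local Open Scope classical_set_scope.

Lemma inf_norm1_sub_Pgt_le (R : realType) (n k d : nat) (alpha : nat -> R)
    (mu : nat -> seq (R * R)) :
  (forall l, (l <= d)%N -> all (fun a => `|a.1| <= 1) (mu l)) ->
  (forall l m, (l <= d)%N -> (m <= k)%N -> moment (mu l) m = (m == l)%:R) ->
  inf [set norm1 n (fun x => symf n d alpha x - g x) | g in @Pgt R n k]
    <= \sum_(l < d.+1) `|alpha l| * variation (mu l).
Proof.
move=> mu_bd mu_moment.
pose H x := \sum_(l < d.+1) alpha l * riesz_integral n (mu l) x.
have H_walsh x : H x =
    \sum_(S : {set 'I_n}) (\sum_(l < d.+1) alpha l * moment (mu l) #|S|) * walsh n S x.
  rewrite /H; under eq_bigr do rewrite riesz_integral_walsh mulr_sumr.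
  rewrite exchange_big /=; apply: eq_bigr => S _; rewrite mulr_suml.
  by apply: eq_bigr => l _; rewrite mulrA.
have f_sub_H : Pgt n k (fun x => symf n d alpha x - H x).
  exists (fun S : {set 'I_n} =>
    \sum_(l < d.+1) alpha l * ((#|S| == l)%:R - moment (mu l) #|S|)).
  split=> [S Sk|x].
    by apply: big1 => l _; rewrite mu_moment ?subrr ?mulr0 // -ltnS.
  rewrite symf_walsh H_walsh -sumrB; apply: eq_bigr => S _.
  by rewrite -mulrBl -sumrB; congr (_ * _); apply: eq_bigr => l _; rewrite mulrBr.
set E := [set _ | g in _].
have E_lb : has_lbound E by exists 0 => _ [g _ <-]; apply: norm1_ge0.
have E_H : E (norm1 n H).
  exists (fun x => symf n d alpha x - H x) => //; congr norm1.
  by apply/funext => x; rewrite opprB addrC subrK.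
apply: le_trans (ge_inf E_lb E_H) _.
pose alpha_riesz (l : 'I_d.+1) x := alpha l * riesz_integral n (mu l) x.
apply: le_trans (@norm1_sum_le R n _ _ alpha_riesz) _.
apply: ler_sum => l _; rewrite norm1_scale ler_wpM2l //.
by apply: norm1_riesz_integral; rewrite mu_bd // -ltnS.
Qed.

Theorem theorem1p4 (R : realType) (n k d : nat) (hkn : (k <= n)%N) (hdk : (d <= k)%N)
  (alpha : nat -> R) :
  inf [set norm1 n (fun x => symf n d alpha x - g x) | g in @Pgt R n k]
    <= \sum_(l < d.+1) `|alpha l| * `|ctilde (R := R) k l|.
Proof.
rewrite (eq_bigr (fun l : 'I_d.+1 => `|alpha l| * variation (cheb_measure k l))); last first.
  by move=> l _; rewrite variation_cheb_measure // -ltnS (leq_trans (ltn_ord l)).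
apply: inf_norm1_sub_Pgt_le => [l _|l m ld mk]; first exact: cheb_measure_bounded.
by rewrite moment_cheb_measure // (leq_trans ld).
Qed.
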